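(* Let $\mathcal R$ be a reaction network and let $\mathcal U=\mathcal U_1\cup\mathcal U_2\subseteq\mathcal S$ be a set of non-interacting species with $\mathcal U_1\cap\mathcal U_2=\emptyset$. Assume $\mathcal U_1$ is eliminable in $\mathcal R$ with respect to some $\mathcal F_1\subseteq\mathcal R_{\mathcal U_1}$, and that $\mathcal U_2$ is eliminable in the reduced network $\widetilde{\mathcal R}=\mathcal R^*_{\mathcal U_1,\mathcal F_1}$ with respect to $\mathcal F_2=\widetilde{\mathcal R}_{\mathcal U_2}$. Then $\mathcal U$ is eliminable in $\mathcal R$ with respect to $\mathcal F=\mathcal F_1\cup\mathcal R_{\mathcal U_2}$.
   Context: Species $S_1,\dots,S_n$ are the unit vectors of $\mathbb{N}_0^n$ and $\mathcal S=\{S_1,\dots,S_n\}$; for $x\in\mathbb{N}_0^n$, $\mathrm{supp}(x)=\{S_k: x^k>0\}$. A reaction network (RN) is a (possibly infinite) subset $\mathcal R\subseteq\mathbb{N}_0^n\times\mathbb{N}_0^n$ containing no $(y,y')$ with $y=y'$; elements $(y,y')$ are reactions $y\to y'$ with reactant $y$ and product $y'$. For $r_1=(y_1,y_1'),\ r_2=(y_2,y_2')$ define $r_1\oplus r_2=(y_1+0\vee(y_2-y_1'),\ y_2'+0\vee(y_1'-y_2))$ ($\vee$ componentwise maximum); it is associative. $\mathrm{cl}(A)$ is the set of all finite $\oplus$-sums of elements of $A$, including $(0,0)$. $(y_1,y_1')\sim(0,0)$ means $y_1=y_1'$. For $\mathcal U\subseteq\mathcal S$ and a set $B\subseteq\mathbb{N}_0^n\times\mathbb{N}_0^n$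 write $B_{\mathcal U}=\{(y,y')\in B:\mathrm{supp}(y)\cap\mathcal U\neq\emptyset\}$ and $B_{\mathcal U}'=\{(y,y')\in B:\mathrm{supp}(y')\cap\mathcal U\neq\emptyset\}$. For an RN $\mathcal R$ and $\mathcal U$, set $\overline{\mathcal R}=\mathrm{cl}(\mathcal R)$, $\mathcal R_0=\mathcal R\setminus(\mathcal R_{\mathcal U}\cup\mathcal R_{\mathcal U}')$ and $\overline{\mathcal R}_0=\overline{\mathcal R}\setminus(\overline{\mathcal R}_{\mathcal U}\cup\overline{\mathcal R}_{\mathcal U}')$. $\mathcal U$ is eliminable in $\mathcal R$ with respect to $\mathcal F\subseteq\mathcal R_{\mathcal U}$ if for every $r_0\in\mathcal R_{\mathcal U}'$ and every $r_1\in\mathrm{cl}(\mathcal F)$ with $r_0\oplus r_1\notin\overline{\mathcal R}_{\mathcal U}$ there exists $r_2\in\mathrm{cl}(\mathcal F)$ with $r_0\oplus r_1\oplus r_2\in\overline{\mathcal R}_0$. In that case the reduced RN is $\mathcal R^*_{\mathcal U,\mathcal F}=\mathcal R_0\cup\mathcal R_{\mathcal U,\mathcal F}$, where $\mathcal R_{\mathcal U,\mathcal F}=\{r_0\oplus r_1\in\overline{\mathcal R}_0: r_0\in\mathcal R_{\mathcal U}',\ r_1\in\mathrm{cl}(\mathcal F)\}\setminus\{r: r\sim(0,0)\}$. $\mathcal U$ consists of non-interacting species (in $\mathcal R$) if for every reaction $y\to y'\in\mathcal R$, $\sum_{S_i\in\mathcal U}y^i\le1$ and $\sum_{S_i\in\mathcal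 U}(y')^i\le1$. *)

From mathcomp Require Import all_boot all_order.
Set Implicit Arguments. Unset Strict Implicit. Unset Printing Implicit Defensive.

(* Complexes: elements of N_0^n, species are indices i : 'I_n. *)
Definition vec (n : nat) := {ffun 'I_n -> nat}.
Definition reaction (n : nat) := (vec n * vec n)%type.
Definition rset (n : nat) := reaction n -> Prop.

Definition vzero (n : nat) : vec n := [ffun _ => 0%N].

Definition is_RN n (R : rset n) : Prop := forall r, R r -> r.1 <> r.2.

(* r1 (+) r2 = (y1 + 0 v (y2 - y1'), y2' + 0 v (y1' - y2)); truncated nat
   subtraction is exactly 0 v (a - b). *)
Definition oplus n (r1 r2 : reaction n) : reaction n :=
  ([ffun i => r1.1 i + (r2.1 i - r1.2 i)]%N,
   [ffun i => r2.2 i + (r1.2 i - r2.1 i)]%N).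

Inductive cl n (A : rset n) : rset n :=
| cl_zero : cl A (vzero n, vzero n)
| cl_add : forall r a, cl A r -> A a -> cl A (oplus r a).

Definition equiv0 n (r : reaction n) : Prop := r.1 = r.2.

Definition meets n (U : {set 'I_n}) (x : vec n) : Prop :=
  exists2 i, i \in U & (0 < x i)%N.

Definition subU n (B : rset n) (U : {set 'I_n}) : rset n :=
  fun r => B r /\ meets U r.1.
Definition subU' n (B : rset n) (U : {set 'I_n}) : rset n :=
  fun r => B r /\ meets U r.2.

Definition sub0 n (B : rset n) (U : {set 'I_n}) : rset n :=
  fun r => B r /\ ~ subU B U r /\ ~ subU' B U r.

Definition R0 n (R : rset n) U := sub0 R U.
Definition Rbar0 n (R : rset n) U := sub0 (cl R) U.

Definition eliminable n (R : rset n) (U : {set 'I_n}) (F : rset n) : Prop :=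
  (forall r, F r -> subU R U r) /\
  forall r0 r1, subU' R U r0 -> cl F r1 ->
    ~ subU (cl R) U (oplus r0 r1) ->
    exists2 r2, cl F r2 & Rbar0 R U (oplus (oplus r0 r1) r2).

Definition R_UF n (R : rset n) (U : {set 'I_n}) (F : rset n) : rset n :=
  fun r => (exists r0 r1, subU' R U r0 /\ cl F r1 /\ r = oplus r0 r1)
           /\ Rbar0 R U r /\ ~ equiv0 r.

Definition reduced n (R : rset n) (U : {set 'I_n}) (F : rset n) : rset n :=
  fun r => R0 R U r \/ R_UF R U F r.

Definition non_interacting n (R : rset n) (U : {set 'I_n}) : Prop :=
  forall r, R r -> (\sum_(i in U) r.1 i <= 1)%N /\ (\sum_(i in U) r.2 i <= 1)%N.

Definition runion n (A B : rset n) : rset n := fun r => A r \/ B r.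

From mathcomp Require Import all_boot all_order.
From mathcomp Require Import zify.
Set Implicit Arguments. Unset Strict Implicit. Unset Printing Implicit Defensive.

(* Write U = U1 u U2, F = F1 u R_U2, Rt = R*_{U1,F1} and F2 = Rt_U2.  Take
   r0 in R'_U and r1 = a_1 (+) ... (+) a_k in cl(F) with r0 (+) r1 free of U
   in its reactant.  As U is non-interacting, every partial composite
   r0 (+) a_1 (+) ... (+) a_j carries at most one U-molecule (a "token") in its
   product, and each a_j consumes it.  The token history is summarised by the
   predicate [pending] on product vectors: no token; a token v in U2 reached by
   an unfinished U2-elimination chain of Rt ([reach2 v]); or a token w in U1
   inside an F1-excursion started from a reaction b ([pend1 w]), which when it
   returns to U2 becomes a reaction of Rt extending the U2-chain.  We show that
   [pending] is preserved along cl(F) ([pending_chain]), and, using the two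
   eliminability hypotheses, that every pending product can be consumed by an
   element of cl(F) leaving no U-species ([pending_completable]); the theorem
   follows by applying both to r0 and r1. *)

Lemma oplus1E n (a b : reaction n) i : (oplus a b).1 i = a.1 i + (b.1 i - a.2 i).
Proof. by rewrite /oplus ffunE. Qed.

Lemma oplus2E n (a b : reaction n) i : (oplus a b).2 i = b.2 i + (a.2 i - b.1 i).
Proof. by rewrite /oplus ffunE. Qed.

Lemma reaction_eq n (a b : reaction n) :
  (forall i, a.1 i = b.1 i) -> (forall i, a.2 i = b.2 i) -> a = b.
Proof.
case: a b => [a1 a2] [b1 b2] /= h1 h2.
by move/ffunP: h1 => ->; move/ffunP: h2 => ->.
Qed.

Lemma oplusA n (a b c : reaction n) : oplus (oplus a b) c = oplus a (oplus b c).
Proof. apply: reaction_eq => i; rewrite !(oplus1E, oplus2E); lia. Qed.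

Lemma oplus0r n (a : reaction n) : oplus a (vzero n, vzero n) = a.
Proof. apply: reaction_eq => i; rewrite !(oplus1E, oplus2E) /vzero /= ffunE; lia. Qed.

Lemma oplus0l n (a : reaction n) : oplus (vzero n, vzero n) a = a.
Proof. apply: reaction_eq => i; rewrite !(oplus1E, oplus2E) /vzero /= ffunE; lia. Qed.

Lemma oplus_fix1 n (c r : reaction n) i :
  ((oplus c r).1 i = c.1 i) <-> (r.1 i <= c.2 i).
Proof. rewrite oplus1E; lia. Qed.

Lemma oplus_match n (c r : reaction n) i :
  c.2 i = r.1 i -> (oplus c r).1 i = c.1 i /\ (oplus c r).2 i = r.2 i.
Proof. rewrite oplus1E oplus2E; lia. Qed.

Lemma oplus_fix1_split n (c r a : reaction n) i :
  (oplus c (oplus r a)).1 i = c.1 i ->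
  (oplus c r).1 i = c.1 i /\ (oplus (oplus c r) a).1 i = (oplus c r).1 i.
Proof. rewrite -oplusA !oplus1E; lia. Qed.

Lemma oplus_closes n (c r : reaction n) i :
  c.1 i = 0 -> (oplus c r).1 i = 0 -> (oplus c r).2 i = 0 ->
  r.1 i = c.2 i /\ r.2 i = 0.
Proof. rewrite oplus1E oplus2E; lia. Qed.

Lemma cl_single n (A : rset n) a : A a -> cl A a.
Proof. by move=> h; rewrite -(oplus0l a); apply: cl_add => //; apply: cl_zero. Qed.

Lemma cl_oplus n (A : rset n) x y : cl A x -> cl A y -> cl A (oplus x y).
Proof.
move=> hx; elim => [|r a _ IH ha]; first by rewrite oplus0r.
by rewrite -oplusA; apply: cl_add.
Qed.

Lemma cl_gen n (A B : rset n) x : (forall r, A r -> cl B r) -> cl A x -> cl B x.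
Proof.
move=> h; elim => [|r a _ IH ha]; first exact: cl_zero.
by apply: cl_oplus => //; apply: h.
Qed.

Lemma cl_mono n (A B : rset n) x : (forall r, A r -> B r) -> cl A x -> cl B x.
Proof. by move=> h; apply: cl_gen => r /h; apply: cl_single. Qed.

Definition avoids n (A : {set 'I_n}) (x : vec n) := forall i, i \in A -> x i = 0.
Definition unit_on n (A : {set 'I_n}) (x : vec n) (w : 'I_n) :=
  forall i, i \in A -> x i = (i == w).
Definition agree_on n (A : {set 'I_n}) (x y : vec n) :=
  forall i, i \in A -> x i = y i.

Lemma avoidsP n (A : {set 'I_n}) x : ~ meets A x <-> avoids A x.
Proof.
split=> [h i iA|h [i iA]]; last by rewrite h.
by case E: (x i) => [//|k]; case: h; exists i; rewrite ?E.
Qed.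

Lemma avoids_or_unit n (A : {set 'I_n}) (x : vec n) :
  \sum_(i in A) x i <= 1 -> avoids A x \/ exists2 w, w \in A & unit_on A x w.
Proof.
move=> hs; case: (boolP [exists i in A, 0 < x i]).
- move/existsP => [w /andP[wA pos]]; right; exists w => // i iA.
  move: hs; rewrite (bigD1 w) //=.
  case: (eqVneq i w) => [->|ne] /=; first lia.
  by rewrite (bigD1 i) /= ?iA ?ne; lia.
- rewrite negb_exists => /forallP h; left => i iA.
  by move: (h i); rewrite iA /=; lia.
Qed.

Lemma unit_on_sub n (A B : {set 'I_n}) x w :
  B \subset A -> unit_on A x w -> unit_on B x w.
Proof. by move=> /subsetP sBA h i /sBA; apply: h. Qed.

Lemma unit_on_avoids n (A B : {set 'I_n}) x w :
  B \subset A -> w \notin B -> unit_on A x w -> avoids B x.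
Proof.
move=> /subsetP sBA wB h i iB; rewrite h ?sBA //.
by case: eqP iB wB => // ->->.
Qed.

Lemma unit_on_meets n (A : {set 'I_n}) x w : w \in A -> unit_on A x w -> meets A x.
Proof. by move=> wA h; exists w => //; rewrite h // eqxx. Qed.

Lemma unit_on_token n (A B : {set 'I_n}) x w :
  B \subset A -> unit_on A x w -> meets B x -> w \in B.
Proof.
move=> /subsetP sBA h [i iB]; rewrite h ?sBA //.
by case: eqP => [<-|].
Qed.

Lemma unit_on_agree n (A : {set 'I_n}) x y w :
  unit_on A x w -> unit_on A y w -> agree_on A x y.
Proof. by move=> hx hy i iA; rewrite hx ?hy. Qed.

Lemma avoids_agree n (A : {set 'I_n}) x y :
  agree_on A x y -> avoids A x -> avoids A y.
Proof. by move=> e h i iA; rewrite -e ?h. Qed.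

Lemma unit_on_agree_r n (A : {set 'I_n}) x y w :
  agree_on A x y -> unit_on A x w -> unit_on A y w.
Proof. by move=> e h i iA; rewrite -e ?h. Qed.

Lemma agree_on_sub n (A B : {set 'I_n}) x y :
  B \subset A -> agree_on A x y -> agree_on B x y.
Proof. by move=> /subsetP sBA h i /sBA; apply: h. Qed.

Lemma sub0_avoids n (B : rset n) (A : {set 'I_n}) r :
  sub0 B A r -> avoids A r.1 /\ avoids A r.2.
Proof.
by case=> Br [h1 h2]; split; apply/avoidsP => m; [apply: h1 | apply: h2].
Qed.

Lemma sub0_closes n (B : rset n) (A : {set 'I_n}) c r :
  avoids A c.1 -> sub0 B A (oplus c r) ->
  forall i, i \in A -> r.1 i = c.2 i /\ r.2 i = 0.
Proof.
move=> a1 /sub0_avoids [z1 z2] i iA.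
by apply: oplus_closes; [apply: a1 | apply: z1 | apply: z2].
Qed.

Section Composition.

Variables (n : nat) (R : rset n) (U1 U2 : {set 'I_n}) (F1 : rset n).
Hypothesis U12_disjoint : [disjoint U1 & U2].
Hypothesis U_noninteracting : non_interacting R (U1 :|: U2).
Hypothesis F1_sub : forall r, F1 r -> subU R U1 r.

Local Notation U := (U1 :|: U2).
Local Notation Rt := (reduced R U1 F1).
Local Notation F2 := (subU Rt U2).
Local Notation F := (runion F1 (subU R U2)).

Lemma U1_notin_U2 i : i \in U1 -> i \notin U2.
Proof. by move=> iU1; rewrite (disjointFr U12_disjoint iU1). Qed.

Lemma U2_notin_U1 i : i \in U2 -> i \notin U1.
Proof. by move=> iU2; rewrite (disjointFl U12_disjoint iU2). Qed.

Lemma F_subU r : F r -> subU R U r.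
Proof.
case=> [/F1_sub|] [Rr [i iA p]]; split=> //; exists i => //.
all: by rewrite in_setU iA ?orbT.
Qed.

Lemma F_reactant_unit a : F a -> exists2 u, u \in U & unit_on U a.1 u.
Proof.
move=> /F_subU [Ra ma].
by case: (avoids_or_unit (U_noninteracting Ra).1) => // /avoidsP.
Qed.

Lemma R_product_unit a :
  R a -> avoids U a.2 \/ exists2 u, u \in U & unit_on U a.2 u.
Proof. by move=> Ra; apply: avoids_or_unit (U_noninteracting Ra).2. Qed.

Lemma clF1_avoids_U2 x : cl F1 x -> avoids U2 x.1.
Proof.
elim=> [|c a _ IH Fa] i iU2; first by rewrite /vzero /= ffunE.
have [u uU au] := F_reactant_unit (or_introl Fa).
have uU1 := unit_on_token (subsetUl U1 U2) au (F1_sub Fa).2.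
have a1U2 := unit_on_avoids (subsetUr U1 U2) (U1_notin_U2 uU1) au.
by rewrite oplus1E IH // a1U2.
Qed.

Lemma reduced_avoids_U1 r : Rt r -> avoids U1 r.1 /\ avoids U1 r.2.
Proof.
by case=> [h|[_ [h _]]]; apply: sub0_avoids h.
Qed.

Lemma cl_reduced_avoids_U1 x : cl Rt x -> avoids U1 x.1 /\ avoids U1 x.2.
Proof.
elim=> [|c a _ [IH1 IH2] /reduced_avoids_U1 [h1 h2]].
  by split=> i _; rewrite /vzero /= ffunE.
by split=> i iU; rewrite (oplus1E, oplus2E) ?IH1 ?IH2 ?h1 ?h2.
Qed.

Lemma reduced_of_R0 a : R a -> avoids U1 a.1 -> avoids U1 a.2 -> Rt a.
Proof.
by move=> Ra /avoidsP h1 /avoidsP h2; left; split=> //; split=> -[].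
Qed.

Lemma reduced_of_excursion b run :
  R b -> meets U1 b.2 -> cl F1 run ->
  avoids U1 (oplus b run).1 -> avoids U1 (oplus b run).2 ->
  ~ equiv0 (oplus b run) -> Rt (oplus b run).
Proof.
move=> Rb mb crun /avoidsP h1 /avoidsP h2 ne; right; split; last split => //.
  by exists b, run.
split; last by split=> -[].
apply: cl_oplus; first exact: cl_single.
by apply: cl_mono crun => r /F1_sub [].
Qed.

Lemma F2_clF r : F2 r -> cl F r.
Proof.
move=> [[[Rr _]|[[r0 [r1 [[Rr0 _] [c1 ->]]] _]]] m].
  by apply: cl_single; right.
apply: cl_oplus; last by apply: cl_mono c1 => x hx; left.
apply: cl_single; right; split => //.
case: m => i iU p; exists i => //; move: p.
by rewrite oplus1E (clF1_avoids_U2 c1) // addn0.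
Qed.

Definition reach2 (v : 'I_n) : Prop :=
  exists r0 r1, subU' Rt U2 r0 /\ cl F2 r1 /\
    avoids U2 (oplus r0 r1).1 /\ unit_on U2 (oplus r0 r1).2 v.

Definition open2 (x : vec n) : Prop :=
  avoids U2 x \/ exists2 v, v \in U2 & unit_on U2 x v /\ reach2 v.

Lemma open2_agree x y : agree_on U2 x y -> open2 x -> open2 y.
Proof.
move=> e [h|[v vU [hv r]]]; [left; exact: avoids_agree h|right].
by exists v => //; split => //; apply: unit_on_agree_r hv.
Qed.

Lemma reach2_enter m u :
  Rt m -> open2 m.1 -> u \in U2 -> unit_on U2 m.2 u -> reach2 u.
Proof.
move=> Rtm [a1|[v vU [m1 [r0 [r1 [h0 [h1 [h2 h3]]]]]]]] uU m2.
  exists m, (vzero n, vzero n); rewrite oplus0r; split; last split=> //.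
    by split=> //; apply: unit_on_meets m2.
  exact: cl_zero.
exists r0, (oplus r1 m); split=> //; split.
  by apply: cl_add => //; split => //; apply: unit_on_meets m1.
rewrite -oplusA; split=> i iU.
  by have [-> _] := oplus_match (unit_on_agree h3 m1 iU); apply: h2.
by have [_ ->] := oplus_match (unit_on_agree h3 m1 iU); apply: m2.
Qed.

Definition pend1 (w : 'I_n) : Prop :=
  exists b run, R b /\ meets U1 b.2 /\ cl F1 run /\
    avoids U1 (oplus b run).1 /\ unit_on U (oplus b run).2 w /\
    open2 (oplus b run).1.

Definition pending (x : vec n) : Prop :=
  avoids U x \/
  (exists2 v, v \in U2 & unit_on U x v /\ reach2 v) \/
  (exists2 w, w \in U1 & unit_on U x w /\ pend1 w).

Lemma pending_agree x y : agree_on U x y -> pending x -> pending y.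
Proof.
move=> e [h|[[v vU [hv r]]|[w wU [hw p]]]]; first by left; apply: avoids_agree h.
  by right; left; exists v => //; split=> //; apply: unit_on_agree_r hv.
by right; right; exists w => //; split=> //; apply: unit_on_agree_r hw.
Qed.

Lemma reach2_close b run u :
  R b -> meets U1 b.2 -> cl F1 run -> avoids U1 (oplus b run).1 ->
  open2 (oplus b run).1 -> u \in U2 -> unit_on U (oplus b run).2 u ->
  reach2 u.
Proof.
move=> Rb mb crun a1 o1 uU m2.
have m2' : unit_on U2 (oplus b run).2 u by apply: unit_on_sub m2; apply: subsetUr.
have [e|ne] := eqVneq (oplus b run).1 (oplus b run).2.
  case: o1 => [h|[v vU [hv r]]].
    by move: (h u uU); rewrite e m2' ?eqxx.
  suff -> : u = v by [].
  by move: (hv u uU); rewrite e m2' ?eqxx //; case: eqP.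
apply: (reach2_enter _ o1 uU m2'); apply: reduced_of_excursion => //.
  by apply: unit_on_avoids m2; [apply: subsetUl | apply: U2_notin_U1].
by move=> e; move: ne; rewrite e eqxx.
Qed.

Lemma pending_after a : R a -> avoids U1 a.1 -> open2 a.1 -> pending a.2.
Proof.
move=> Ra a1 o1; case: (R_product_unit Ra) => [a2|[u uU a2]]; first by left.
right; case/setUP: (uU) => [uU1|uU2].
  right; exists u => //; split=> //.
  exists a, (vzero n, vzero n); rewrite oplus0r; split=> //; split.
    by apply: unit_on_meets uU1 _; apply: unit_on_sub a2; apply: subsetUl.
  by split=> //; apply: cl_zero.
left; exists u => //; split=> //.
apply: (reach2_enter _ o1 uU2); last by apply: unit_on_sub a2; apply: subsetUr.
apply: reduced_of_R0 => //.
by apply: unit_on_avoids a2; [apply: subsetUl | apply: U2_notin_U1].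
Qed.

Lemma pending_excursion w a :
  pend1 w -> F1 a -> unit_on U a.1 w -> pending a.2.
Proof.
move=> [b [run [Rb [mb [crun [a1 [m2 o1]]]]]]] F1a aw.
have match_a i : i \in U ->
    (oplus (oplus b run) a).1 i = (oplus b run).1 i /\
    (oplus (oplus b run) a).2 i = a.2 i.
  by move=> iU; apply: oplus_match; exact: (unit_on_agree m2 aw) iU.
have e1 : agree_on U (oplus b run).1 (oplus b (oplus run a)).1.
  by move=> i /match_a [e _]; rewrite -oplusA e.
have e2 : agree_on U a.2 (oplus b (oplus run a)).2.
  by move=> i /match_a [_ e]; rewrite -oplusA e.
have crun' : cl F1 (oplus run a) by apply: cl_add.
have a1' := avoids_agree (agree_on_sub (subsetUl U1 U2) e1) a1.
have o1' := open2_agree (agree_on_sub (subsetUr U1 U2) e1) o1.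
case: (R_product_unit (F1_sub F1a).1) => [a2|[u uU a2]]; first by left.
have m2' := unit_on_agree_r e2 a2.
right; case/setUP: (uU) => [uU1|uU2].
  by right; exists u => //; split=> //; exists b, (oplus run a).
by left; exists u => //; split=> //; apply: (reach2_close Rb mb crun' a1' o1').
Qed.

Lemma token_match x a :
  pending x -> F a -> (forall i, i \in U -> a.1 i <= x i) -> agree_on U a.1 x.
Proof.
move=> px Fa le; have [u uU au] := F_reactant_unit Fa.
have := le u uU; rewrite au // eqxx.
case: px => [h|[[w _ [hw _]]|[w _ [hw _]]]]; first by rewrite h.
all: by rewrite hw //; case: eqP => // uw _; apply: (unit_on_agree au); rewrite uw.
Qed.

Lemma pending_step x a : pending x -> F a -> agree_on U a.1 x -> pending a.2.
Proof.
move=> px Fa e; have [u uU au] := F_reactant_unit Fa.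
case: px => [h|[[v vU [hv r]]|[w wU [hw p]]]].
- by move: (e u uU); rewrite h // au // eqxx.
- have av := unit_on_agree_r (fun i iU => esym (e i iU)) hv.
  apply: (pending_after (F_subU Fa).1).
    by apply: unit_on_avoids av; [apply: subsetUl | apply: U2_notin_U1].
  by right; exists v => //; split=> //; apply: unit_on_sub av; apply: subsetUr.
- have aw := unit_on_agree_r (fun i iU => esym (e i iU)) hw.
  apply: (pending_excursion p _ aw); case: Fa => // -[_ m].
  have := unit_on_token (subsetUr U1 U2) aw m.
  by rewrite (negbTE (U1_notin_U2 wU)).
Qed.

Lemma pending_chain (c r : reaction n) :
  pending c.2 -> cl F r ->
  (forall i, i \in U -> (oplus c r).1 i = c.1 i) -> pending (oplus c r).2.
Proof.
move=> pc; elim=> [|r' a _ IH Fa] fix1; first by rewrite oplus0r.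
have {}fix1 i (iU : i \in U) := oplus_fix1_split (fix1 i iU).
have pr' := IH (fun i iU => (fix1 i iU).1).
have e := token_match pr' Fa (fun i iU => (oplus_fix1 _ _ _).1 (fix1 i iU).2).
rewrite -oplusA; apply: pending_agree (pending_step pr' Fa e).
by move=> i iU; rewrite (oplus_match (esym (e i iU))).2.
Qed.

Definition completable (x : vec n) : Prop :=
  exists2 r, cl F r & agree_on U r.1 x /\ avoids U r.2.

Lemma completable_cat r x :
  cl F r -> agree_on U r.1 x -> completable r.2 -> completable x.
Proof.
move=> cr e [r3 c3 [e3 a3]]; exists (oplus r r3); first exact: cl_oplus.
split=> i iU; have [e1 e2] := oplus_match (esym (e3 i iU)).
  by rewrite e1 e.
by rewrite e2 a3.
Qed.

Hypothesis U1_eliminable : eliminable R U1 F1.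
Hypothesis U2_eliminable : eliminable Rt U2 F2.

(* Eliminability of U2 in Rt completes an open U2-chain; the completing
   composite of F2 is a composite of F, and is free of U1. *)
Lemma reach2_completable v x :
  v \in U2 -> reach2 v -> unit_on U x v -> completable x.
Proof.
move=> vU [r0 [r1 [h0 [h1 [a1 m2]]]]] xv.
have [|r2 c2 closed] := U2_eliminable.2 r0 r1 h0 h1.
  by case=> _; apply/avoidsP.
have close := sub0_closes a1 closed.
have [z1 z2] := cl_reduced_avoids_U1 (cl_mono (fun r (h : F2 r) => h.1) c2).
exists r2; first exact: cl_gen F2_clF c2.
split=> i /setUP [iU|iU].
- rewrite z1 // xv ?in_setU ?iU //.
  by case: eqP iU => // ->; rewrite (negbTE (U2_notin_U1 vU)).
- by rewrite (close i iU).1 m2 // xv // in_setU iU orbT.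
- exact: z2.
- exact: (close i iU).2.
Qed.

Lemma completable_avoids_U1 x : avoids U1 x -> pending x -> completable x.
Proof.
move=> a1 [h|[[v vU [hv r]]|[w wU [hw _]]]].
- exists (vzero n, vzero n); first exact: cl_zero.
  by split=> i iU; rewrite /vzero /= ffunE ?h.
- exact: reach2_completable r hv.
- by move: (a1 w wU); rewrite hw ?eqxx // in_setU wU.
Qed.

(* Eliminability of U1 closes an F1-excursion by some r2 in cl(F1); the
   product after r2 is pending and free of U1, hence completable. *)
Lemma pend1_completable w x :
  w \in U1 -> pend1 w -> unit_on U x w -> completable x.
Proof.
move=> wU p1 xw; have pM := p1.
case: p1 => b [run [Rb [mb [crun [a1 [m2 o1]]]]]].
set M := oplus b run in a1 m2 o1.
have [|r2 c2 closed] := U1_eliminable.2 b run (conj Rb mb) crun.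
  by case=> _; apply/avoidsP.
have close := sub0_closes a1 closed.
have e2 : agree_on U r2.1 M.2.
  move=> i /setUP [iU|iU]; first exact: (close i iU).1.
  rewrite (clF1_avoids_U2 c2) // m2 ?in_setU ?iU ?orbT //.
  by case: eqP iU => // ->; rewrite (negbTE (U1_notin_U2 wU)).
have c2F : cl F r2 by apply: cl_mono c2 => r h; left.
apply: (completable_cat c2F); first by move=> i iU; rewrite e2 // m2 // xw.
have pM2 : pending (oplus M r2).2.
  apply: pending_chain c2F _; first by right; right; exists w.
  by move=> i iU; rewrite (oplus_match (esym (e2 i iU))).1.
apply: completable_avoids_U1; first by move=> i /close [].
by apply: pending_agree pM2 => i iU; rewrite (oplus_match (esym (e2 i iU))).2.
Qed.

Lemma pending_completable x : pending x -> completable x.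
Proof.
move=> px; case: (px) => [h|[[v vU [hv _]]|[w wU [hw p]]]].
- by apply: completable_avoids_U1 px => i iU; rewrite h // in_setU iU.
- apply: completable_avoids_U1 px.
  by apply: unit_on_avoids hv; [apply: subsetUl | apply: U2_notin_U1].
- exact: pend1_completable p hw.
Qed.

End Composition.

Theorem proposition4p10 (n : nat) (R : rset n) (U1 U2 : {set 'I_n})
    (F1 : rset n) :
  is_RN R ->
  non_interacting R (U1 :|: U2) ->
  [disjoint U1 & U2] ->
  (forall r, F1 r -> subU R U1 r) ->
  eliminable R U1 F1 ->
  eliminable (reduced R U1 F1) U2 (subU (reduced R U1 F1) U2) ->
  eliminable R (U1 :|: U2) (runion F1 (subU R U2)).
Proof.
move=> _ hNI hd hF1 hE1 hE2.
have FR r : runion F1 (subU R U2) r -> R r by move/(F_subU hF1) => [].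
split=> [r|r0 r1 [Rr0 _] c1 notU]; first exact: F_subU.
set C := oplus r0 r1.
have clC : cl R C by apply: cl_oplus; [apply: cl_single | apply: cl_mono c1].
have aC : avoids (U1 :|: U2) C.1 by apply/avoidsP => m; apply: notU.
have a0 : avoids (U1 :|: U2) r0.1.
  by move=> i iU; move: (aC i iU); rewrite oplus1E; lia.
(* the token history of r0 (+) r1 is pending, hence completable *)
have p0 : pending R U1 U2 F1 r0.2.
  by apply: (pending_after hd hNI Rr0); [|left];
    move=> i iU; rewrite a0 // in_setU iU ?orbT.
have pC : pending R U1 U2 F1 C.2.
  by apply: (pending_chain hd hNI hF1 p0 c1) => i iU; rewrite aC ?a0.
have [r2 c2 [e2 a2]] := pending_completable hd hNI hF1 hE1 hE2 pC.
have matched i (iU : i \in U1 :|: U2) := oplus_match (esym (e2 i iU)).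
exists r2 => //; split; first by apply: cl_oplus => //; apply: cl_mono c2.
split=> -[_]; apply/avoidsP => i iU; first by rewrite (matched i iU).1 aC.
by rewrite (matched i iU).2 a2.
Qed.
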